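(* In the setting described in the context, let $p$ be a facet of $\Delta_\lambda$ of $\mathbf a$-degree at least $1$, with nodes $v_1,\dots,v_{k-1}$ labelled $1,\dots,k-1$, so that $p$ is identified with the simplex on $[k-1]=\{1,\dots,k-1\}$. Then every facet of $F_{<p}\cap p$ is of the form $[k-1]\setminus L$ where $L=\{i,i+1,\dots,i+j\}$ is a set of consecutive indices.
   Context: Let $n,d\ge2$, $V(n,d)=\{\mathbf b\in\mathbb N^n:\sum_i b_i=d\}$, and let $\mathbf a\in V(n,d)$ satisfy $a_1\le\dots\le a_n$ and $\mathbf a\notin\{(0,\dots,0,d),(0,\dots,0,1,d-1),(0,\dots,0,2,d-2)\}$. Let $\Gamma=V(n,d)\setminus\{\mathbf a\}$ and assume $\Gamma+\Gamma=V(n,2d)$. Order $V(n,d)$ lexicographically ($b<c$ iff the first nonzero coordinate of $c-b$ is positive). Let $\lambda$ be in the semigroup generated by $\Gamma$, $k=|\lambda|=(\sum_i\lambda_i)/d$. A closed chain from $0$ to $\lambda$ is a sequence $0=v_0,v_1,\dots,v_k=\lambda$ in $\mathbb N^n$ with all links $v_j-v_{j-1}\in V(n,d)$; its $\mathbf a$-degree is the number of links equal to $\mathbf a$; its open chain is $\{v_1,\dots,v_{k-1}\}$, with $v_j$ the node labelled $j$. $\Delta_\lambda$ is the simplicial complex whose facets are all these open chains. Facets are ordered: $q<p$ iff $\mathbf a$-degree of $q$ is smaller than that of $p$, or equal and the link sequence of $q$ is lexicographically smaller than that of $p$ (first links compared first, using the order on $V(n,d)$). $F_{<p}$ is the subcomplex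 of $\Delta_\lambda$ generated by the facets $q<p$; $p$ also denotes the full simplex on its nodes. *)

From mathcomp Require Import all_boot.
Set Implicit Arguments. Unset Strict Implicit. Unset Printing Implicit Defensive.

Definition vec (n : nat) := {ffun 'I_n -> nat}.
Definition vsum n (b : vec n) : nat := \sum_(i < n) b i.
Definition vzero n : vec n := [ffun=> 0].
Definition vadd n (b c : vec n) : vec n := [ffun i => b i + c i].
Definition vsumseq n (s : seq (vec n)) : vec n := foldr (@vadd n) (vzero n) s.

Definition inV n (d : nat) (b : vec n) : bool := vsum b == d.

Definition ltlex n (b c : vec n) : Prop :=
  exists i : 'I_n, (forall j : 'I_n, j < i -> b j = c j) /\ b i < c i.

Definition exc1 n d : vec n := [ffun i : 'I_n => if val i == n.-1 then d else 0].
Definition exc2 n d : vec n :=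
  [ffun i : 'I_n => if val i == n.-1 then d - 1 else if val i == n.-2 then 1 else 0].
Definition exc3 n d : vec n :=
  [ffun i : 'I_n => if val i == n.-1 then d - 2 else if val i == n.-2 then 2 else 0].

(* A closed chain from 0 to lam, given by its sequence of links
   v_1 - v_0, ..., v_k - v_{k-1}. *)
Definition closed_chain n d (lam : vec n) (ls : seq (vec n)) : Prop :=
  all (inV d) ls /\ vsumseq ls = lam.

Definition adeg n (a : vec n) (ls : seq (vec n)) : nat := count (pred1 a) ls.

Definition node n (ls : seq (vec n)) (j : nat) : vec n := vsumseq (take j ls).

(* the open chain {v_1, ..., v_{k-1}} (as a set of points), k = size ls *)
Definition open_chain n (ls : seq (vec n)) (x : vec n) : Prop :=
  exists j, 1 <= j <= (size ls).-1 /\ x = node ls j.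

(* order on facets (identified with their link sequences) *)
Definition facet_lt n (a : vec n) (q p : seq (vec n)) : Prop :=
  adeg a q < adeg a p \/
  (adeg a q = adeg a p /\
   exists m, m < size q /\ m < size p /\
     (forall t, t < m -> nth (vzero n) q t = nth (vzero n) p t) /\
     ltlex (nth (vzero n) q m) (nth (vzero n) p m)).

(* faces of F_{<p} \cap p : subsets of the nodes of p contained in
   the open chain of some closed chain q < p *)
Definition face_Flt_cap n d (a lam : vec n) (p : seq (vec n)) (S : vec n -> Prop) : Prop :=
  (forall x, S x -> open_chain p x) /\
  exists q, closed_chain d lam q /\ facet_lt a q p /\ (forall x, S x -> open_chain q x).

Definition facet_Flt_cap n d (a lam : vec n) (p : seq (vec n)) (S : vec n -> Prop) : Prop :=
  face_Flt_cap d a lam p S /\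
  forall T, face_Flt_cap d a lam p T -> (forall x, S x -> T x) -> forall x, T x -> S x.

From mathcomp Require Import all_boot zify.
Set Implicit Arguments. Unset Strict Implicit. Unset Printing Implicit Defensive.

(** Let [S] be a facet of [F_{<p} ∩ p], contained in the open chain of some
    closed chain [q < p].  The labels where [p] and [q] share a node cut both
    chains into blocks, and comparing [q] with [p] block by block shows that
    some block [(l1, l2)] of length at least two can be transplanted from [q]
    into [p] to give a chain [q' < p].  Since node labels are determined by
    coordinate sums, [S] avoids the labels strictly between [l1] and [l2]; but
    [q'] shares with [p] every other node, so by maximality [S] is exactly
    [[k-1] \ {l1+1, ..., l2-1}]. *)

Section VectorSums.
Variable n : nat.
Implicit Types (b c e : vec n) (s : seq (vec n)).

Lemma vadd0r b : vadd b (vzero n) = b.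
Proof. by apply/ffunP=> i; rewrite !ffunE addn0. Qed.

Lemma vaddA b c e : vadd b (vadd c e) = vadd (vadd b c) e.
Proof. by apply/ffunP=> i; rewrite !ffunE addnA. Qed.

Lemma vaddI b : injective (vadd b).
Proof. by move=> c e /ffunP E; apply/ffunP=> i; move: (E i); rewrite !ffunE => /addnI. Qed.

Lemma vsumseq_cat s1 s2 : vsumseq (s1 ++ s2) = vadd (vsumseq s1) (vsumseq s2).
Proof.
elim: s1 => [|b s1 IH] /=; first by apply/ffunP=> i; rewrite !ffunE.
by rewrite IH vaddA.
Qed.

Lemma vsum_vadd b c : vsum (vadd b c) = vsum b + vsum c.
Proof. by rewrite /vsum -big_split; apply: eq_bigr => i _; rewrite ffunE. Qed.

Lemma vsum_vsumseq d s : all (inV d) s -> vsum (vsumseq s) = size s * d.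
Proof.
elim: s => [_|b s IH /= /andP[/eqP b_d s_d]].
  by rewrite /vsum big1 // => i _; rewrite ffunE.
by rewrite vsum_vadd b_d IH // mulSn.
Qed.

End VectorSums.

Definition agree n (p q : seq (vec n)) l := node p l = node q l.

Section Nodes.
Variables (n d : nat).
Implicit Types (p q s : seq (vec n)).

Lemma node_size s : node s (size s) = vsumseq s.
Proof. by rewrite /node take_size. Qed.

Lemma vsum_node s l : all (inV d) s -> l <= size s -> vsum (node s l) = l * d.
Proof.
move=> /allP s_d le_l_s; rewrite /node (@vsum_vsumseq _ d) ?size_takel //.
by apply/allP=> b /mem_take /s_d.
Qed.

Lemma node_label_inj p q l l' : 0 < d -> all (inV d) p -> all (inV d) q ->
  l <= size p -> l' <= size q -> node p l = node q l' -> l = l'.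
Proof.
move=> d_gt0 p_d q_d le_l le_l' E; apply/eqP; rewrite -(eqn_pmul2r d_gt0).
by rewrite -(vsum_node p_d le_l) E (vsum_node q_d le_l').
Qed.

Lemma closed_chain_size lam p q : 0 < d ->
  closed_chain d lam p -> closed_chain d lam q -> size p = size q.
Proof.
move=> d_gt0 [p_d p_lam] [q_d q_lam]; apply/eqP; rewrite -(eqn_pmul2r d_gt0).
by rewrite -(vsum_vsumseq p_d) -(vsum_vsumseq q_d) p_lam q_lam.
Qed.

Lemma nodeS s l : l < size s -> node s l.+1 = vadd (node s l) (nth (vzero n) s l).
Proof.
by move=> lt_l_s; rewrite /node (take_nth (vzero n) lt_l_s) -cats1 vsumseq_cat /= vadd0r.
Qed.

Lemma nth_agree_succ p q l : l < size p -> l < size q ->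
  agree p q l -> agree p q l.+1 -> nth (vzero n) p l = nth (vzero n) q l.
Proof. by move=> lt_p lt_q agree_l; rewrite /agree !nodeS // agree_l => /vaddI. Qed.

Lemma open_chain_common p q x : 0 < d -> all (inV d) p -> all (inV d) q ->
  size p = size q -> open_chain p x -> open_chain q x ->
  exists l, [/\ 1 <= l <= (size p).-1, x = node p l & x = node q l].
Proof.
move=> d_gt0 p_d q_d eq_pq [l [l_in ->]] [l' [l'_in E]].
have ll' : l = l' by apply: (node_label_inj d_gt0 p_d q_d) => //; lia.
by subst l'; exists l.
Qed.

End Nodes.

Definition seg n (s : seq (vec n)) l1 l2 := take (l2 - l1) (drop l1 s).
Definition splice n (p q : seq (vec n)) l1 l2 := take l1 p ++ seg q l1 l2 ++ drop l2 p.

Section Segments.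
Variable n : nat.
Implicit Types (a : vec n) (p q s : seq (vec n)).

Lemma take_seg s l1 l2 : l1 <= l2 -> take l1 s ++ seg s l1 l2 = take l2 s.
Proof. by move=> le12; rewrite /seg -takeD subnKC. Qed.

Lemma node_seg s l1 l2 : l1 <= l2 -> vadd (node s l1) (vsumseq (seg s l1 l2)) = node s l2.
Proof. by move=> le12; rewrite /node -vsumseq_cat take_seg. Qed.

Lemma seg_cat s l1 l l2 : l1 <= l -> l <= l2 -> seg s l1 l2 = seg s l1 l ++ seg s l l2.
Proof.
move=> le1 le2; rewrite /seg.
have -> : l2 - l1 = (l - l1) + (l2 - l) by lia.
by rewrite takeD drop_drop subnK.
Qed.

Lemma size_seg s l1 l2 : l1 <= l2 -> l2 <= size s -> size (seg s l1 l2) = l2 - l1.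
Proof. by move=> le12 le2; rewrite /seg size_takel // size_drop; lia. Qed.

Lemma seg1 s l : l < size s -> seg s l l.+1 = [:: nth (vzero n) s l].
Proof. by move=> lt_l_s; rewrite /seg subSnn (drop_nth (vzero n) lt_l_s) /= take0. Qed.

Lemma drop_seg s l1 l2 : l1 <= l2 -> drop l1 s = seg s l1 l2 ++ drop l2 s.
Proof.
by move=> le12; rewrite /seg -{1}(cat_take_drop (l2 - l1) (drop l1 s)) drop_drop subnK.
Qed.

Lemma split3 s l1 l2 : l1 <= l2 -> s = take l1 s ++ seg s l1 l2 ++ drop l2 s.
Proof. by move=> le12; rewrite -drop_seg // cat_take_drop. Qed.

Lemma take_eq_agree p q m : m <= size p -> m <= size q ->
  (forall t, t < m -> nth (vzero n) p t = nth (vzero n) q t) -> take m p = take m q.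
Proof.
move=> le_p le_q eq_pq; apply: (@eq_from_nth _ (vzero n)); first by rewrite !size_takel.
by move=> t; rewrite size_takel // => lt_t; rewrite !nth_take // eq_pq.
Qed.

Section Splice.
Variables (p q : seq (vec n)) (l1 l2 : nat).
Hypotheses (eq_size : size p = size q) (le12 : l1 <= l2) (le2 : l2 <= size p).
Hypotheses (agree1 : agree p q l1) (agree2 : agree p q l2).

Lemma size_splice : size (splice p q l1 l2) = size p.
Proof.
rewrite /splice !size_cat size_drop size_takel; last lia.
by rewrite size_seg //; lia.
Qed.

Lemma count_splice (P : pred (vec n)) :
  count P (splice p q l1 l2) + count P (seg p l1 l2) = count P p + count P (seg q l1 l2).
Proof. by rewrite /splice [in count P p](split3 p le12) !count_cat; lia. Qed.

Lemma nth_splice_lt t : t <= l1 -> t < l2 ->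
  nth (vzero n) (splice p q l1 l2) t = nth (vzero n) (if t < l1 then p else q) t.
Proof.
move=> le_t lt_t; rewrite /splice nth_cat size_takel; last lia.
case: ltnP => [lt_t1|le_t1]; first by rewrite nth_take.
have -> : t = l1 by lia.
have lt12 : l1 < l2 by lia.
rewrite subnn nth_cat size_seg -?eq_size // subn_gt0 lt12.
by rewrite /seg nth_take ?subn_gt0 // nth_drop addn0.
Qed.

Lemma node_splice_out l : l <= size p -> ~~ (l1 < l < l2) -> node (splice p q l1 l2) l = node p l.
Proof.
move=> le_l out_l; have [le_l1|lt_l1] := leqP l l1.
  by rewrite /node /splice takel_cat ?take_takel // size_takel //; lia.
have le_l2l : l2 <= l by lia.
have size_front : size (take l1 p ++ seg q l1 l2) = l2.
  by rewrite size_cat size_takel ?size_seg; lia.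
rewrite /splice catA /node -(subnKC le_l2l) !takeD take_size_cat // drop_size_cat //.
by rewrite !vsumseq_cat -/(node p l1) -/(node p l2) agree1 node_seg // agree2.
Qed.

Lemma splice_closed_chain d lam : closed_chain d lam p -> closed_chain d lam q ->
  closed_chain d lam (splice p q l1 l2).
Proof.
move=> [/allP p_d p_lam] [/allP q_d _]; split.
  apply/allP=> b; rewrite !mem_cat => /or3P[/mem_take|/mem_take/mem_drop|/mem_drop].
  - exact: p_d.
  - exact: q_d.
  - exact: p_d.
by rewrite -node_size size_splice node_splice_out ?node_size //; lia.
Qed.

Lemma splice_lt_adeg a : count (pred1 a) (seg q l1 l2) < count (pred1 a) (seg p l1 l2) ->
  facet_lt a (splice p q l1 l2) p.
Proof.
move=> lt_cnt; left.
by rewrite /adeg -(ltn_add2r (count_mem a (seg p l1 l2))) count_splice ltn_add2l.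
Qed.

Lemma splice_lt_lex a : l1 < l2 ->
  count (pred1 a) (seg q l1 l2) = count (pred1 a) (seg p l1 l2) ->
  ltlex (nth (vzero n) q l1) (nth (vzero n) p l1) -> facet_lt a (splice p q l1 l2) p.
Proof.
move=> lt12 eq_cnt lex; right; split.
  by apply/eqP; rewrite /adeg -(eqn_add2r (count_mem a (seg p l1 l2))) count_splice eq_cnt.
exists l1; rewrite size_splice; do 2 (split; first lia); split.
  by move=> t lt_t; rewrite nth_splice_lt ?lt_t //; lia.
by rewrite nth_splice_lt ?ltnn.
Qed.

End Splice.
End Segments.

Lemma ltlex_irr n (b : vec n) : ~ ltlex b b.
Proof. by case=> i [_]; rewrite ltnn. Qed.

Definition agree_gap n (p q : seq (vec n)) l1 l2 : Prop :=
  [/\ l1 < l2, agree p q l1, agree p q l2 & forall l, l1 < l < l2 -> ~ agree p q l].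

Section Gaps.
Variables (n : nat) (a : vec n) (p q : seq (vec n)).
Hypotheses (eq_size : size p = size q) (agree_end : agree p q (size p)).

Lemma next_agree_gap l0 : l0 < size p -> agree p q l0 ->
  exists l2, l2 <= size p /\ agree_gap p q l0 l2.
Proof.
move=> lt0 agree0.
have ex_l : exists l, [&& l0 < l, l <= size p & node p l == node q l].
  by exists (size p); rewrite lt0 leqnn; apply/eqP.
case: (ex_minnP ex_l) => l2 /and3P[lt02 le2 /eqP agree2] min_l2.
exists l2; split=> //; split=> // l /andP[lt0l ltl2] agree_l.
have := min_l2 l; rewrite lt0l agree_l eqxx andbT; have -> : l <= size p by lia.
by move=> /(_ isT); lia.
Qed.

Lemma long_gap l1 l2 : l2 <= size p -> agree_gap p q l1 l2 ->
  seg p l1 l2 <> seg q l1 l2 -> l1.+2 <= l2.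
Proof.
move=> le2 [lt12 agree1 agree2 _] neq_seg; rewrite ltnNge; apply/negP=> le_l2.
have l2E : l2 = l1.+1 by lia.
subst l2; apply: neq_seg; rewrite !seg1 -?eq_size //.
by rewrite (nth_agree_succ _ _ agree1 agree2) -?eq_size.
Qed.

Lemma exists_gap_count l0 : l0 <= size p -> agree p q l0 ->
  count_mem a (drop l0 q) < count_mem a (drop l0 p) ->
  exists l1 l2, [/\ l1.+2 <= l2, l2 <= size p, agree_gap p q l1 l2
                  & count_mem a (seg q l1 l2) < count_mem a (seg p l1 l2)].
Proof.
have [N] := ubnP (size p - l0); elim: N l0 => // N IH l0 ltN le0 agree0 lt_cnt.
have lt0 : l0 < size p.
  rewrite ltnNge; apply/negP=> le_p; move: lt_cnt.
  by rewrite !drop_oversize -?eq_size.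
have [l2 [le2 gap]] := next_agree_gap lt0 agree0; have [lt02 _ agree2 _] := gap.
move: lt_cnt; rewrite (drop_seg p (ltnW lt02)) (drop_seg q (ltnW lt02)) !count_cat.
case: (ltnP (count_mem a (seg q l0 l2)) (count_mem a (seg p l0 l2))).
  move=> lt_head _.
  exists l0, l2; split=> //; apply: long_gap => // E.
  by move: lt_head; rewrite E ltnn.
by move=> le_head lt_cnt; apply: (IH l2) => //; lia.
Qed.

Lemma exists_gap_splice_lt_count l0 : l0 <= size p -> agree p q l0 ->
  count_mem a (drop l0 q) < count_mem a (drop l0 p) ->
  exists l1 l2, [/\ l1.+2 <= l2, l2 <= size p, agree_gap p q l1 l2
                  & facet_lt a (splice p q l1 l2) p].
Proof.
move=> le0 agree0 /(exists_gap_count le0 agree0) [l1 [l2 [long le2 gap lt_cnt]]].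
have [_ agree1 agree2 _] := gap.
by exists l1, l2; split=> //; apply: splice_lt_adeg => //; lia.
Qed.

Lemma exists_gap_splice_lt : facet_lt a q p ->
  exists l1 l2, [/\ l1.+2 <= l2, l2 <= size p, agree_gap p q l1 l2
                  & facet_lt a (splice p q l1 l2) p].
Proof.
case=> [lt_adeg|[eq_adeg [m [ltm_q [ltm_p [eq_pre lex]]]]]].
  apply: (exists_gap_splice_lt_count (leq0n _)); first by rewrite /agree /node !take0.
  by rewrite !drop0.
have agree_m : agree p q m.
  by rewrite /agree /node (take_eq_agree (ltnW ltm_q) (ltnW ltm_p) eq_pre).
have [l2 [le2 gap]] := next_agree_gap ltm_p agree_m; have [ltm2 _ agree2 _] := gap.
have long : m.+2 <= l2.
  apply: long_gap => // E; move: E lex.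
  rewrite (seg_cat p (leqnSn m) ltm2) (seg_cat q (leqnSn m) ltm2) !seg1 //.
  by case=> -> _; apply: ltlex_irr.
rewrite /adeg (split3 p (ltnW ltm2)) (split3 q (ltnW ltm2)) !count_cat in eq_adeg.
rewrite (take_eq_agree (ltnW ltm_q) (ltnW ltm_p) eq_pre) in eq_adeg.
case: (ltngtP (count_mem a (seg q m l2)) (count_mem a (seg p m l2))).
- by move=> lt_cnt; exists m, l2; split=> //; apply: splice_lt_adeg => //; lia.
- by move=> gt_cnt; apply: (exists_gap_splice_lt_count le2) => //; lia.
- by move=> eq_cnt; exists m, l2; split=> //; apply: splice_lt_lex => //; lia.
Qed.

End Gaps.

Theorem lemma3p2 (n d : nat) (a lam : vec n) (p : seq (vec n)) (S : vec n -> Prop) :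
  2 <= n -> 2 <= d ->
  inV d a ->
  (forall i j : 'I_n, i <= j -> a i <= a j) ->
  a <> exc1 n d -> a <> exc2 n d -> a <> exc3 n d ->
  (* Gamma + Gamma = V(n,2d), Gamma = V(n,d) \ {a} *)
  (forall c : vec n, inV (2 * d) c ->
     exists b1 b2 : vec n, [/\ inV d b1, b1 != a, inV d b2, b2 != a & vadd b1 b2 = c]) ->
  (* lam in the semigroup generated by Gamma *)
  (exists gs : seq (vec n), all (fun b => inV d b && (b != a)) gs /\ vsumseq gs = lam) ->
  (* p a facet of Delta_lam of a-degree >= 1 *)
  closed_chain d lam p -> 1 <= adeg a p ->
  facet_Flt_cap d a lam p S ->
  exists i j : nat,
    1 <= i /\ i + j <= (size p).-1 /\
    forall x, S x <-> exists l, [/\ 1 <= l <= (size p).-1, ~~ (i <= l <= i + j) & x = node p l].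
Proof.
move=> _ le2d _ _ _ _ _ _ _ chain_p _ [[S_p [q [chain_q [lt_qp S_q]]]] S_max].
have d_gt0 : 0 < d by lia.
have eq_size := closed_chain_size d_gt0 chain_p chain_q.
have agree_end : agree p q (size p).
  by rewrite /agree {2}eq_size !node_size chain_p.2 chain_q.2.
have [l1 [l2 [long le2 [_ agree1 agree2 disagree] lt_splice]]] :=
  exists_gap_splice_lt eq_size agree_end lt_qp.
have le12 : l1 <= l2 by lia.
pose T x := exists l, [/\ 1 <= l <= (size p).-1, ~~ (l1 < l < l2) & x = node p l].
have face_T : face_Flt_cap d a lam p T.
  split=> [x [l [l_in _ ->]]|]; first by exists l.
  exists (splice p q l1 l2); split; first exact: splice_closed_chain.
  split=> // x [l [l_in l_out ->]]; exists l.
  by rewrite size_splice // node_splice_out //; lia.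
have sub_ST x : S x -> T x.
  move=> Sx; have [l [l_in xp xq]] :=
    open_chain_common d_gt0 chain_p.1 chain_q.1 eq_size (S_p x Sx) (S_q x Sx).
  exists l; split=> //; apply/negP=> l_gap; apply: (disagree l l_gap).
  by rewrite /agree -xp -xq.
have T_S x : T x -> S x by apply: (S_max T).
exists l1.+1, (l2 - l1 - 2); do 2 (split; first lia).
move=> x; split=> [/sub_ST|Tx]; last apply: T_S.
  by case=> l [l_in l_out ->]; exists l; split=> //; lia.
by case: Tx => l [l_in l_out ->]; exists l; split=> //; lia.
Qed.
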